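(* Let $m\ge 2$ be an integer and let $G$ be a graph without isolated vertices containing no induced subgraph isomorphic to $K_{1,m}$. Then $\tilde{H}_k(\operatorname{ind}(G);\mathbf{k})=0$ for all \[k\le\left\lceil\frac{\dim(\operatorname{ind}(G))-2m+3}{m-1}\right\rceil.\]
   Context: All graphs are finite and simple; $\mathbf{k}$ is a fixed field. $K_{1,m}$ is the complete bipartite graph with parts of sizes $1$ and $m$. $\operatorname{ind}(G)$ is the simplicial complex on $V(G)$ whose faces are the independent sets of $G$; its dimension is one less than the maximum size of an independent set. $\tilde H_k$ denotes reduced simplicial homology with coefficients in $\mathbf{k}$. *)

From HB Require Import structures.
From mathcomp Require Import all_boot all_order all_algebra.
Set Implicit Arguments. Unset Strict Implicit. Unset Printing Implicit Defensive.
Import Order.TTheory GRing.Theory Num.Theory.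
Local Open Scope ring_scope.

Definition simple_graph (T : finType) (e : rel T) : Prop :=
  symmetric e /\ irreflexive e.

Definition no_isolated (T : finType) (e : rel T) : Prop :=
  forall v : T, exists u : T, e v u.

(* the star K_{1,m}: vertex set option 'I_m, center None, leaves Some i *)
Definition star_adj (m : nat) : rel (option 'I_m) :=
  fun x y => (x == None) != (y == None).

Definition has_induced_star (T : finType) (e : rel T) (m : nat) : Prop :=
  exists f : option 'I_m -> T,
    injective f /\ forall x y, e (f x) (f y) = star_adj x y.

Definition independent (T : finType) (e : rel T) (A : {set T}) : bool :=
  [forall x in A, forall y in A, ~~ e x y].

Definition ind_complex (T : finType) (e : rel T) : {set {set T}} :=
  [set A : {set T} | independent e A].

Definition cdim (T : finType) (D : {set {set T}}) : int :=
  (\max_(A in D) #|A|)%:Z - 1.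

(* Faces are ordered by the
   enumeration order of T; a k-simplex is a face with k+1 vertices, and the
   empty face is the unique (-1)-simplex (augmented = reduced complex). *)
Definition chain (F : fieldType) (T : finType) := {ffun {set T} -> F}.

Definition bsign (F : fieldType) (T : finType) (s : {set T}) (v : T) : F :=
  (-1) ^+ #|[set u in s | enum_rank u < enum_rank v]|%N.

Definition boundary (F : fieldType) (T : finType) (c : chain F T) : chain F T :=
  [ffun t : {set T} =>
     \sum_(s : {set T}) \sum_(v in s | t == s :\ v) bsign F s v * c s].

Definition is_kchain (F : fieldType) (T : finType) (D : {set {set T}})
    (k : int) (c : chain F T) : Prop :=
  forall s : {set T}, c s != 0 -> s \in D /\ (#|s|%:Z = k + 1).

Definition reduced_homology_vanishes (F : fieldType) (T : finType)
    (D : {set {set T}}) (k : int) : Prop :=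
  forall c : chain F T, is_kchain D k c -> boundary c = 0 ->
    exists d : chain F T, is_kchain D (k + 1) d /\ boundary d = c.

(* For v in W, the complex ind(G[W]) is the union of the deletion ind(G[W - v]) and
   the cone with apex v over the link ind(G[W - N[v]]).  Splitting every chain as
   c = c_del + v * c_link accordingly shows that the reduced homology of ind(G[W]) in
   degree k vanishes as soon as that of the deletion does in degree k and that of the
   link does in degree k - 1.  Induct on |W| keeping an independent set S of W with
   |S| >= (m-1)(k+1) + 1 and choosing v outside S: the deletion still contains S, and
   S - N[v] lies in the link with |S - N[v]| >= (m-1)k + 1, because the vertices of S
   adjacent to v form an induced star and so number at most m - 1.  When W is inside S
   the complex is a full simplex, i.e. a cone.  A maximum independent set of G has
   dim(ind G) + 1 vertices, which yields the bound on k. *)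

From HB Require Import structures.
From mathcomp Require Import all_boot all_order all_algebra zify.
Import Order.TTheory GRing.Theory Num.Theory.
Set Implicit Arguments. Unset Strict Implicit. Unset Printing Implicit Defensive.
Local Open Scope ring_scope.

Section Chains.
Variables (F : fieldType) (T : finType).
Implicit Types (c : chain F T) (s t : {set T}) (u v : T).
Local Notation bsign := (bsign F).

Lemma bsignU1 u v s : u \notin s ->
  bsign (u |: s) v = (-1) ^+ (enum_rank u < enum_rank v)%N * bsign s v.
Proof.
move=> us; rewrite /bsign -exprD; congr (_ ^+ _).
have [ltuv|geuv] /= := boolP (enum_rank u < enum_rank v)%N.
  have -> : [set w in u |: s | (enum_rank w < enum_rank v)%N]
          = u |: [set w in s | (enum_rank w < enum_rank v)%N].
    by apply/setP => w; rewrite !inE; case: eqP => // ->.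
  by rewrite cardsU1 inE (negbTE us).
apply: eq_card => w; rewrite !inE.
by case: eqP => // ->; rewrite (negbTE geuv) (negbTE us).
Qed.

Lemma bsign_setD1 v s : bsign (s :\ v) v = bsign s v.
Proof.
rewrite /bsign; congr (_ ^+ _); apply: eq_card => u; rewrite !inE.
by case: (u =P v) => [->|]; rewrite ?ltnn ?andbF.
Qed.

Lemma bsignU1_id v s : bsign (v |: s) v = bsign s v.
Proof. by rewrite -bsign_setD1 -[RHS]bsign_setD1 setDUl setDv set0U. Qed.

Lemma bsign_anticomm u v t : u \notin t -> v \in t ->
  bsign t u * bsign (u |: t) v = - (bsign t v * bsign (t :\ v) u).
Proof.
move=> ut vt; have uv : u != v by apply: contraNneq ut => ->.
rewrite bsignU1 // -{1}(setD1K vt) bsignU1 ?setD11 // mulrACA -signr_addb.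
have -> : (enum_rank v < enum_rank u)%N (+) (enum_rank u < enum_rank v)%N.
  by case: ltngtP => // /ord_inj/enum_rank_inj eq_vu; rewrite eq_vu eqxx in uv.
by rewrite expr1 mulN1r mulrC.
Qed.

Lemma boundaryE c t :
  boundary c t = \sum_(u | u \notin t) bsign (u |: t) u * c (u |: t).
Proof.
rewrite ffunE (exchange_big_dep xpredT) //= (bigID (fun u => u \in t)) /=.
rewrite big1 ?add0r => [|u ut]; last first.
  by rewrite big_pred0 // => s; apply/andP => -[us /eqP tE]; move: ut; rewrite tE setD11.
apply: eq_bigr => u ut; rewrite (big_pred1 (u |: t)) // => s /=.
apply/andP/eqP => [[us /eqP ->]|->]; first by rewrite setD1K.
by rewrite setU11 setU1K.
Qed.

Lemma boundary_is_zmod_morphism : zmod_morphism (@boundary F T).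
Proof.
move=> c d; apply/ffunP => t; rewrite !ffunE -sumrB; apply: eq_bigr => s _.
by rewrite -sumrB; apply: eq_bigr => v _; rewrite !ffunE mulrBr.
Qed.

HB.instance Definition _ := GRing.isZmodMorphism.Build (chain F T) (chain F T)
  (@boundary F T) boundary_is_zmod_morphism.

Definition cone v c : chain F T :=
  [ffun s : {set T} => if v \in s then bsign s v * c (s :\ v) else 0].

Lemma cone_is_zmod_morphism v : zmod_morphism (cone v).
Proof.
move=> c d; apply/ffunP => s; rewrite !ffunE; case: ifP => _; last by rewrite subr0.
by rewrite mulrBr.
Qed.

HB.instance Definition _ v := GRing.isZmodMorphism.Build (chain F T) (chain F T)
  (cone v) (cone_is_zmod_morphism v).

Definition avoids v c := forall s, v \in s -> c s = 0.

Lemma boundary_avoids v c : avoids v c -> avoids v (boundary c).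
Proof. by move=> cv s vs; rewrite boundaryE big1 // => u _; rewrite cv ?mulr0 // setU1r. Qed.

Lemma boundary_cone v c : avoids v c -> boundary (cone v c) = c - cone v (boundary c).
Proof.
move=> cv; apply/ffunP => t.
rewrite boundaryE [RHS]ffunE [X in _ + X]ffunE [cone v _ t]ffunE.
have [vt|vt] := boolP (v \in t); last first.
  rewrite subr0 (bigD1 v) //= ffunE setU11 setU1K // bsignU1_id signrMK.
  rewrite big1 ?addr0 // => u /andP [ut uv].
  by rewrite ffunE !inE (negbTE vt) eq_sym (negbTE uv) mulr0.
rewrite cv // sub0r boundaryE [in RHS](bigD1 v) ?setD11 //= setD1K // cv // mulr0 add0r.
rewrite mulr_sumr -sumrN [in RHS](eq_bigl (fun u => u \notin t)) => [|u]; last first.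
  by rewrite !inE negb_and negbK; case: (u =P v) => [->|]; rewrite ?vt ?andbT.
apply: eq_bigr => u ut; have uv : u != v by apply: contraNneq ut => ->.
rewrite ffunE setU1r //.
have -> : (u |: t) :\ v = u |: (t :\ v).
  by apply/setP => w; rewrite !inE; case: (w =P u) => [->|]; rewrite ?uv.
by rewrite mulrA !bsignU1_id bsign_anticomm // mulNr mulrA.
Qed.

Lemma avoids_cone v c : avoids v c -> avoids v (cone v c) -> c = 0.
Proof.
move=> cv ccv; apply/ffunP => s; rewrite ffunE.
have [vs|vs] := boolP (v \in s); first exact: cv.
have := ccv (v |: s) (setU11 v s); rewrite ffunE setU11 setU1K //.
by move/eqP; rewrite mulf_eq0 signr_eq0 => /eqP.
Qed.

Definition chain_del v c : chain F T := [ffun s : {set T} => if v \in s then 0 else c s].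

Definition chain_link v c : chain F T :=
  [ffun s : {set T} => if v \in s then 0 else bsign s v * c (v |: s)].

Lemma avoids_del v c : avoids v (chain_del v c).
Proof. by move=> s vs; rewrite ffunE vs. Qed.

Lemma avoids_link v c : avoids v (chain_link v c).
Proof. by move=> s vs; rewrite ffunE vs. Qed.

Lemma chain_split v c : c = chain_del v c + cone v (chain_link v c).
Proof.
apply/ffunP => s; rewrite !ffunE setD11.
have [vs|vs] := boolP (v \in s); last by rewrite addr0.
by rewrite add0r setD1K // bsign_setD1 signrMK.
Qed.

Lemma boundary_split v c : boundary c = 0 ->
  boundary (chain_link v c) = 0 /\ boundary (chain_del v c) = - chain_link v c.
Proof.
move=> bc; have := congr1 (@boundary F T) (chain_split v c).
rewrite bc raddfD /= (boundary_cone (avoids_link c)) addrA => /esym/eqP.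
rewrite subr_eq0 => /eqP E.
suff bl : boundary (chain_link v c) = 0.
  by split=> //; apply/eqP; rewrite -addr_eq0 E bl raddf0.
apply: avoids_cone; first exact/boundary_avoids/avoids_link.
rewrite -E => s vs; rewrite ffunE (boundary_avoids (avoids_del c)) //.
by rewrite (avoids_link c) // add0r.
Qed.

End Chains.

Section KChains.
Variables (F : fieldType) (T : finType).
Implicit Types (D : {set {set T}}) (c d : chain F T).

Lemma is_kchainD D k c d : is_kchain D k c -> is_kchain D k d -> is_kchain D k (c + d).
Proof.
move=> hc hd s; rewrite ffunE.
by have [/hc //|/negPn/eqP ->] := boolP (c s != 0); rewrite add0r => /hd.
Qed.

Lemma is_kchainN D k c : is_kchain D k c -> is_kchain D k (- c).
Proof. by move=> hc s; rewrite ffunE oppr_eq0 => /hc. Qed.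

Lemma is_kchainS D1 D2 k c : D1 \subset D2 -> is_kchain D1 k c -> is_kchain D2 k c.
Proof. by move=> sD hc s /hc [/(subsetP sD) ? ?]. Qed.

Lemma homology_vanishes_below D k : k + 1 < 0 -> reduced_homology_vanishes F D k.
Proof.
move=> hk c hc _; exists 0; split=> [s|]; first by rewrite ffunE eqxx.
suff -> : c = 0 by rewrite raddf0.
apply/ffunP => s; rewrite ffunE; apply/eqP; apply: contraT => /hc [_ hs].
by move: hk; rewrite -hs.
Qed.

End KChains.

Section IndependenceComplex.
Variables (F : fieldType) (T : finType) (e : rel T).
Hypothesis simple_e : simple_graph e.
Implicit Types (A B S W X : {set T}) (u v : T) (c : chain F T).

Definition ind_on W := [set A : {set T} | (A \subset W) && independent e A].

Definition cnbhd v := v |: [set u | e v u].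

Lemma independentP A :
  reflect (forall x y, x \in A -> y \in A -> ~~ e x y) (independent e A).
Proof.
apply: (iffP forallP) => [h x y xA yA | h x].
  by move/implyP/(_ xA)/forallP/(_ y)/implyP: (h x); apply.
by apply/implyP => xA; apply/forallP => y; apply/implyP; apply: h.
Qed.

Lemma independentS A B : A \subset B -> independent e B -> independent e A.
Proof.
by move=> /subsetP sAB /independentP iB; apply/independentP => x y /sAB ? /sAB; apply: iB.
Qed.

Lemma independentU1 v A : independent e A -> (forall u, u \in A -> ~~ e v u) ->
  independent e (v |: A).
Proof.
have [sym irr] := simple_e; move=> /independentP iA hv.
apply/independentP => x y /setU1P [-> | xA] /setU1P [-> | yA].
- by rewrite irr.
- exact: hv.
- by rewrite sym; apply: hv.
- exact: iA.
Qed.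

Lemma ind_onS W1 W2 : W1 \subset W2 -> ind_on W1 \subset ind_on W2.
Proof.
by move=> sW; apply/subsetP => A; rewrite !inE => /andP [/subset_trans-> //].
Qed.

Lemma is_kchain_avoids W v k c : v \notin W -> is_kchain (ind_on W) k c -> avoids v c.
Proof.
move=> vW hc s vs; apply/eqP; apply: contraT => /hc [].
by rewrite inE => /andP [/subsetP/(_ v vs) vW']; rewrite vW' in vW.
Qed.

Lemma is_kchain_del W v k c :
  is_kchain (ind_on W) k c -> is_kchain (ind_on (W :\ v)) k (chain_del v c).
Proof.
move=> hc s; rewrite ffunE; case: ifPn => [_|vs]; first by rewrite eqxx.
by move=> /hc []; rewrite !inE subsetD1 vs andbT.
Qed.

Lemma is_kchain_link W v k c : is_kchain (ind_on W) k c ->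
  is_kchain (ind_on (W :\: cnbhd v)) (k - 1) (chain_link v c).
Proof.
move=> hc s; rewrite ffunE; case: ifPn => [_|vs]; first by rewrite eqxx.
rewrite mulf_eq0 signr_eq0 => /hc []; rewrite inE => /andP [vsW ivs].
rewrite cardsU1 vs PoszD addrC => /addIr <-; rewrite addrK; split=> //.
rewrite inE (independentS (subsetU1 v s) ivs) andbT subsetD.
rewrite (subset_trans (subsetU1 v s) vsW) disjoint_subset; apply/subsetP => u us.
rewrite !inE negb_or; apply/andP; split; first by apply: contraNneq vs => <-.
by move/independentP: ivs; apply; rewrite ?setU11 ?setU1r.
Qed.

Lemma is_kchain_cone W v k c : v \in W ->
  is_kchain (ind_on (W :\: cnbhd v)) k c -> is_kchain (ind_on W) (k + 1) (cone v c).
Proof.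
move=> vW hc s; rewrite ffunE; case: ifPn => [vs|_]; last by rewrite eqxx.
rewrite mulf_eq0 signr_eq0 => /hc []; rewrite inE => /andP [sWN isv] card_s.
split; last by rewrite (cardsD1 v s) vs PoszD card_s addrC.
rewrite inE -(setD1K vs) subUset sub1set vW (subset_trans sWN) ?subsetDl //=.
apply: independentU1 => // u /(subsetP sWN).
by rewrite !inE negb_or => /andP [/andP [_ /negbTE->]].
Qed.

Lemma ind_on_cone_vanishes W v k : v \in W -> (forall u, u \in W -> ~~ e v u) ->
  reduced_homology_vanishes F (ind_on W) k.
Proof.
move=> vW nv c hc bc; have [_ bdel] := boundary_split v bc.
have sub_link : W :\ v \subset W :\: cnbhd v.
  apply/subsetP => u; rewrite !inE negb_or => /andP [uv uW].
  by rewrite uv uW nv.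
exists (cone v (chain_del v c)); split.
  exact/is_kchain_cone/(is_kchainS (ind_onS sub_link))/is_kchain_del.
by rewrite (boundary_cone (avoids_del c)) bdel raddfN /= opprK -chain_split.
Qed.

Lemma ind_on_del_link_vanishes W v k : v \in W ->
  reduced_homology_vanishes F (ind_on (W :\ v)) k ->
  reduced_homology_vanishes F (ind_on (W :\: cnbhd v)) (k - 1) ->
  reduced_homology_vanishes F (ind_on W) k.
Proof.
move=> vW del_vanishes link_vanishes c hc bc.
have [blink bdel] := boundary_split v bc.
have [d1 [d1_chain bd1]] := link_vanishes _ (is_kchain_link (v := v) hc) blink.
rewrite subrK in d1_chain.
have sub_del : W :\: cnbhd v \subset W :\ v.
  by apply: setDS; rewrite sub1set setU11.
have cycle_del : boundary (chain_del v c + d1) = 0.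
  by rewrite raddfD /= bdel bd1 addNr.
have [d0 [d0_chain bd0]] := del_vanishes _
  (is_kchainD (is_kchain_del (v := v) hc) (is_kchainS (ind_onS sub_del) d1_chain)) cycle_del.
exists (d0 - cone v d1); split.
  apply: is_kchainD; first exact: is_kchainS (ind_onS (subD1set W v)) d0_chain.
  exact/is_kchainN/is_kchain_cone.
have d1_avoids : avoids v d1.
  by apply: is_kchain_avoids d1_chain; rewrite !inE eqxx.
rewrite (raddfB (@boundary F T)) /= bd0 boundary_cone // bd1 opprB addrA addrAC addrK.
by rewrite [in RHS](chain_split v c).
Qed.

Lemma has_induced_star_nbhd m v X : (m <= #|X|)%N -> independent e X ->
  (forall x, x \in X -> e v x) -> has_induced_star e m.
Proof.
have [sym irr] := simple_e; move=> leq_mX /independentP iX vX.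
have vNX : v \notin X by apply/negP => /vX; rewrite irr.
have lt_iX (i : 'I_m) : (i < size (enum X))%N by rewrite -cardE (leq_trans (ltn_ord i)).
have memX (i : 'I_m) : nth v (enum X) i \in X by rewrite -mem_enum mem_nth.
exists (fun o : option 'I_m => if o is Some i then nth v (enum X) i else v); split.
  move=> [i|] [j|] //=.
  - by move/eqP; rewrite nth_uniq ?enum_uniq // => /eqP/val_inj->.
  - by move=> eq_v; move: (memX i); rewrite eq_v (negbTE vNX).
  - by move=> eq_v; move: (memX j); rewrite -eq_v (negbTE vNX).
move=> [i|] [j|]; rewrite /star_adj /=.
- exact/negbTE/iX.
- by rewrite sym vX.
- exact: vX.
- exact: irr.
Qed.

Lemma card_independent_cnbhd m S v : ~ has_induced_star e m ->
  independent e S -> v \notin S -> (#|S :&: cnbhd v| < m)%N.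
Proof.
move=> no_star iS vS; rewrite ltnNge; apply/negP => le_m.
apply: no_star (has_induced_star_nbhd (v := v) le_m (independentS (subsetIl S _) iS) _).
move=> x /setIP [xS]; rewrite !inE => /predU1P [xv|//].
by rewrite -xv xS in vS.
Qed.

Lemma ind_on_vanishes_of_independent m W k S : (0 < m)%N -> ~ has_induced_star e m ->
  S \subset W -> independent e S -> (m%:Z - 1) * (k + 1) + 1 <= #|S|%:Z ->
  reduced_homology_vanishes F (ind_on W) k.
Proof.
move=> m_gt0 no_star; have [n] := ubnP #|W|.
elim: n W k S => // n IH W k S /ltnSE le_Wn SW iS large_S.
have [k_lt|k_ge] := ltrP (k + 1) 0; first exact: homology_vanishes_below.
have [WS0 | [v /setDP [vW vS]]] := set_0Vmem (W :\: S).
  have WS : W \subset S by rewrite -setD_eq0 WS0.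
  have [v vS] : exists v, v \in S.
    by apply/set0Pn; rewrite -card_gt0; nia.
  apply: (ind_on_cone_vanishes (v := v)) => [|u uW]; first exact: subsetP SW v vS.
  by move/independentP: iS; apply=> //; apply: (subsetP WS).
have lt_Wv : (#|W :\ v| < n)%N by rewrite (cardsD1 v W) vW add1n in le_Wn.
apply: (ind_on_del_link_vanishes vW).
  by apply: IH lt_Wv _ iS large_S; rewrite subsetD1 SW.
apply: (IH _ _ (S :\: cnbhd v)).
- by apply: leq_ltn_trans lt_Wv; apply/subset_leq_card/setDS; rewrite sub1set setU11.
- exact: setSD.
- exact: independentS (subsetDl S _) iS.
have small := card_independent_cnbhd no_star iS vS.
move: large_S; rewrite -(cardsID (cnbhd v) S) PoszD; nia.
Qed.

End IndependenceComplex.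

Lemma ceil_dim_bound (m : nat) (d k : int) : (1 < m)%N ->
  k <= Num.ceil (((d - 2 * m%:Z + 3)%:~R / (m%:Z - 1)%:~R) : rat) ->
  (m%:Z - 1) * (k + 1) + 1 <= d + 1.
Proof.
move=> m_gt1; set x := (_ / _ : rat) => k_le.
have m1_gt0 : (0 : rat) < (m%:Z - 1)%:~R by rewrite ltr0z subr_gt0 ltz_nat.
have : ((k - 1)%:~R : rat) < x.
  by apply: le_lt_trans (ceilB1_lt x); rewrite ler_int lerD2r.
rewrite ltr_pdivlMr // -intrM ltr_int; nia.
Qed.

Unset Implicit Arguments.

Theorem corollary6p11 (F : fieldType) (T : finType) (e : rel T) (m : nat) :
  simple_graph e -> (2 <= m)%N -> no_isolated e -> ~ has_induced_star e m ->
  forall k : int,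
    k <= Num.ceil (((cdim (ind_complex e) - 2 * m%:Z + 3)%:~R / (m%:Z - 1)%:~R) : rat) ->
    reduced_homology_vanishes F (ind_complex e) k.
Proof.
move=> simple_e m_ge2 _ no_star k k_le.
have ind_complexT : ind_complex e = ind_on e setT.
  by apply/setP => A; rewrite !inE subsetT.
have [S S_ind S_max] : {S | S \in ind_complex e & \max_(A in ind_complex e) #|A| = #|S|}.
  apply: eq_bigmax_cond; apply/card_gt0P; exists set0.
  by rewrite inE; apply/forallP => x; rewrite inE.
rewrite ind_complexT.
apply: (ind_on_vanishes_of_independent simple_e (ltnW m_ge2) no_star (subsetT S)).
- by move: S_ind; rewrite inE.
- by move: (ceil_dim_bound m_ge2 k_le); rewrite /cdim S_max subrK.
Qed.
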